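(* If $\phi$ is a rational inner function on $\mathbb{D}^2$, then every $\tau\in\mathbb{T}^2$ is a B-point for $\phi$; that is, there exists a sequence $\{\lambda_k\}\subseteq\mathbb{D}^2$ converging to $\tau$ such that $\frac{1-|\phi(\lambda_k)|}{1-\|\lambda_k\|}$ is bounded, where $\|z\|=\max\{|z_1|,|z_2|\}$.
   Context: A rational inner function on $\mathbb{D}^2$ is a rational function $\phi=q/p$ holomorphic on $\mathbb{D}^2$ with $|\phi(\zeta)|=1$ for almost every $\zeta\in\mathbb{T}^2$. *)

From Stdlib Require Import Reals.
Open Scope R_scope.

Definition Cx : Type := (R * R)%type.
Definition C0 : Cx := (0, 0).
Definition C1 : Cx := (1, 0).
Definition Cadd (a b : Cx) : Cx := (fst a + fst b, snd a + snd b).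
Definition Csub (a b : Cx) : Cx := (fst a - fst b, snd a - snd b).
Definition Cmul (a b : Cx) : Cx :=
  (fst a * fst b - snd a * snd b, fst a * snd b + snd a * fst b).
Definition Cmod (a : Cx) : R := sqrt (fst a ^ 2 + snd a ^ 2).
(* multiplicative inverse (the inverse of 0 is 0, never used here) *)
Definition Cinv (a : Cx) : Cx :=
  (fst a / (fst a ^ 2 + snd a ^ 2), - snd a / (fst a ^ 2 + snd a ^ 2)).
Definition Cdiv (a b : Cx) : Cx := Cmul a (Cinv b).
Fixpoint Cpow (a : Cx) (n : nat) : Cx :=
  match n with O => C1 | S m => Cmul a (Cpow a m) end.

Fixpoint Csum (f : nat -> Cx) (n : nat) : Cx :=
  match n with O => C0 | S m => Cadd (Csum f m) (f m) end.

(* A polynomial of bidegree at most (d,d) is given by its coefficients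
   c i j (only 0 <= i,j <= d matter); its value at (z,w) is
   sum_{i,j <= d} c i j z^i w^j. *)
Definition poly2_eval (d : nat) (c : nat -> nat -> Cx) (z : Cx * Cx) : Cx :=
  Csum (fun i => Csum (fun j =>
     Cmul (c i j) (Cmul (Cpow (fst z) i) (Cpow (snd z) j))) (S d)) (S d).

Definition in_D2 (z : Cx * Cx) : Prop := Cmod (fst z) < 1 /\ Cmod (snd z) < 1.
Definition in_T2 (z : Cx * Cx) : Prop := Cmod (fst z) = 1 /\ Cmod (snd z) = 1.
Definition supnorm (z : Cx * Cx) : R := Rmax (Cmod (fst z)) (Cmod (snd z)).

Definition C2_cv (lam : nat -> Cx * Cx) (tau : Cx * Cx) : Prop :=
  forall eps : R, 0 < eps -> exists N : nat, forall k : nat, (N <= k)%nat ->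
    Cmod (Csub (fst (lam k)) (fst tau)) < eps /\
    Cmod (Csub (snd (lam k)) (snd tau)) < eps.

(* phi = q/p is a rational function holomorphic on D^2: written in lowest
   terms, the denominator p has no zeros in D^2. *)
Definition rational_holo_D2 (d : nat) (p q : nat -> nat -> Cx) : Prop :=
  forall z, in_D2 z -> poly2_eval d p z <> C0.

(* |phi| = 1 a.e. on T^2: at every point of T^2 off the (null) zero set of p
   the boundary value of phi is q/p, and it has modulus one. *)
Definition unimodular_ae_T2 (d : nat) (p q : nat -> nat -> Cx) : Prop :=
  forall zeta, in_T2 zeta -> poly2_eval d p zeta <> C0 ->
    Cmod (Cdiv (poly2_eval d q zeta) (poly2_eval d p zeta)) = 1.

Definition rational_inner (d : nat) (p q : nat -> nat -> Cx) : Prop :=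
  rational_holo_D2 d p q /\ unimodular_ae_T2 d p q.

Definition phi_of (d : nat) (p q : nat -> nat -> Cx) (z : Cx * Cx) : Cx :=
  Cdiv (poly2_eval d q z) (poly2_eval d p z).

Definition B_point (phi : Cx * Cx -> Cx) (tau : Cx * Cx) : Prop :=
  exists lam : nat -> Cx * Cx,
    (forall k, in_D2 (lam k)) /\ C2_cv lam tau /\
    exists M : R, forall k,
      Rabs ((1 - Cmod (phi (lam k))) / (1 - supnorm (lam k))) <= M.

From Pilot Require Import Defs.
From Stdlib Require Import Reals Lra Lia Classical.
From Coquelicot Require Import Coquelicot.
Open Scope R_scope.

(* Restrict phi to the complex line through 0 and tau = (t1, t2): P(z) = p(z t1, z t2) and
   Q(z) = q(z t1, z t2) are one-variable polynomials with P(0) <> 0 and |Q| = |P| on the unit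
   circle away from the zeros of P.  Write P = (z - 1)^m A and Q = (z - 1)^m' B with
   A(1), B(1) <> 0.  At the point of the circle at distance t from 1 this reads
   t^m |A| = t^m' |B|, and letting t -> 0 forces m = m' and |A(1)| = |B(1)|.  Hence along the
   radius |phi((1 - u) tau)| = |B(1 - u)| / |A(1 - u)| = 1 + O(u), so the points (1 - u_k) tau
   with u_k -> 0 show that tau is a B-point. *)

Lemma Cmod_triangle_inv (a b : C) : Rabs (Cmod a - Cmod b) <= Cmod (a - b).
Proof.
  apply Rabs_le_between'; split.
  - pose proof (Cmod_triangle (b - a) a) as H.
    replace (b - a + a)%C with b in H by ring.
    replace (b - a)%C with (- (a - b))%C in H by ring.
    rewrite Cmod_opp in H; lra.
  - pose proof (Cmod_triangle (a - b) b) as H.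
    replace (a - b + b)%C with a in H by ring; lra.
Qed.

Lemma Cpow_S (z : C) n : Cpow z (S n) = (z * Cpow z n)%C.
Proof. reflexivity. Qed.

Lemma Cmod_Cpow (z : C) n : Cmod (Cpow z n) = Cmod z ^ n.
Proof.
  induction n as [|n IH]; [apply Cmod_1|].
  rewrite Cpow_S, Cmod_mult, IH; reflexivity.
Qed.

Inductive is_poly : nat -> (C -> C) -> Prop :=
| is_poly_const c : is_poly 0 (fun _ => c)
| is_poly_id : is_poly 1 (fun z => z)
| is_poly_add n f g : is_poly n f -> is_poly n g -> is_poly n (fun z => f z + g z)%C
| is_poly_mul n m f g : is_poly n f -> is_poly m g -> is_poly (n + m) (fun z => f z * g z)%C
| is_poly_S n f : is_poly n f -> is_poly (S n) f
| is_poly_ext n f g : is_poly n f -> (forall z, f z = g z) -> is_poly n g.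

Lemma is_poly_le n m f : is_poly n f -> (n <= m)%nat -> is_poly m f.
Proof. intros Hf Hle; induction Hle; [exact Hf | apply is_poly_S; exact IHHle]. Qed.

Lemma is_poly_const_le n c : is_poly n (fun _ => c).
Proof. apply (is_poly_le 0); [apply is_poly_const | lia]. Qed.

Lemma is_poly0_const n f : is_poly n f -> n = 0%nat -> forall z w, f z = f w.
Proof.
  induction 1 as [c | | n f g _ IHf _ IHg | n m f g _ IHf _ IHg | n f _ _ | n f g _ IHf Efg];
    intros Hn z w; try discriminate; try reflexivity.
  - rewrite (IHf Hn z w), (IHg Hn z w); reflexivity.
  - rewrite (IHf ltac:(lia) z w), (IHg ltac:(lia) z w); reflexivity.
  - rewrite <- !Efg; apply IHf; exact Hn.
Qed.

Lemma is_polyS_divide n f : is_poly n f -> forall k a, n = S k ->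
  exists g, is_poly k g /\ forall z, f z = (f a + (z - a) * g z)%C.
Proof.
  induction 1 as [c | | n f g _ IHf _ IHg | n m f g Hf IHf Hg IHg | n f Hf IHf | n f g _ IHf Efg];
    intros k a Hk; try discriminate.
  - injection Hk as <-.
    exists (fun _ => RtoC 1); split; [apply is_poly_const | intros z; ring].
  - destruct (IHf k a Hk) as [F [HF EF]], (IHg k a Hk) as [G [HG EG]].
    exists (fun z => F z + G z)%C; split; [apply is_poly_add; assumption|].
    intros z; rewrite (EF z), (EG z); ring.
  - destruct n as [|n'].
    + destruct (IHg k a Hk) as [G [HG EG]].
      exists (fun z => f a * G z)%C; split; [apply (is_poly_mul 0 k); [apply is_poly_const | exact HG]|].
      intros z; rewrite (is_poly0_const _ _ Hf eq_refl z a), (EG z); ring.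
    + destruct (IHf n' a eq_refl) as [F [HF EF]]. destruct m as [|m'].
      * exists (fun z => F z * g a)%C; split.
        -- replace k with (n' + 0)%nat by lia. apply is_poly_mul; [exact HF | apply is_poly_const].
        -- intros z; rewrite (EF z), (is_poly0_const _ _ Hg eq_refl z a); ring.
      * destruct (IHg m' a eq_refl) as [G [HG EG]].
        exists (fun z => f a * G z + F z * g z)%C; split.
        -- replace k with (n' + S m')%nat by lia. apply is_poly_add.
           ++ apply (is_poly_le m'); [apply (is_poly_mul 0 m'); [apply is_poly_const | exact HG] | lia].
           ++ apply is_poly_mul; assumption.
        -- intros z; rewrite (EF z), (EG z); ring.
  - injection Hk as ->. destruct k as [|k'].
    + exists (fun _ => RtoC 0); split; [apply is_poly_const|].
      intros z; rewrite (is_poly0_const _ _ Hf eq_refl z a); ring.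
    + destruct (IHf k' a eq_refl) as [G [HG EG]].
      exists G; split; [apply is_poly_S; exact HG | exact EG].
  - destruct (IHf k a Hk) as [G [HG EG]].
    exists G; split; [exact HG|]. intros z; rewrite <- !Efg; apply EG.
Qed.

Lemma is_poly_bounded n f : is_poly n f -> forall r, 0 <= r ->
  exists M, 0 <= M /\ forall z, Cmod z <= r -> Cmod (f z) <= M.
Proof.
  induction 1 as [c | | n f g _ IHf _ IHg | n m f g _ IHf _ IHg | n f _ IHf | n f g _ IHf Efg];
    intros r Hr.
  - exists (Cmod c); split; [apply Cmod_ge_0 | intros; lra].
  - exists r; split; [exact Hr | intros z Hz; exact Hz].
  - destruct (IHf r Hr) as [Mf [Pf Bf]], (IHg r Hr) as [Mg [Pg Bg]].
    exists (Mf + Mg); split; [lra|]. intros z Hz.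
    eapply Rle_trans; [apply Cmod_triangle|]. specialize (Bf z Hz); specialize (Bg z Hz); lra.
  - destruct (IHf r Hr) as [Mf [Pf Bf]], (IHg r Hr) as [Mg [Pg Bg]].
    exists (Mf * Mg); split; [nra|]. intros z Hz. rewrite Cmod_mult.
    apply Rmult_le_compat; auto; apply Cmod_ge_0.
  - exact (IHf r Hr).
  - destruct (IHf r Hr) as [M [PM BM]].
    exists M; split; [exact PM|]. intros z Hz; rewrite <- Efg; auto.
Qed.

Lemma is_poly_lipschitz_at n f a : is_poly n f ->
  exists K, 0 <= K /\ forall z, Cmod (z - a) <= 1 -> Cmod (f z - f a) <= K * Cmod (z - a).
Proof.
  intros Hf. destruct n as [|k].
  - exists 0; split; [lra|]. intros z _.
    rewrite (is_poly0_const _ _ Hf eq_refl z a).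
    replace (f a - f a)%C with (RtoC 0) by ring. rewrite Cmod_0. pose proof (Cmod_ge_0 (z - a)); lra.
  - destruct (is_polyS_divide _ _ Hf k a eq_refl) as [g [Hg Eg]].
    destruct (is_poly_bounded _ _ Hg (Cmod a + 1)) as [K [HK Bg]]; [pose proof (Cmod_ge_0 a); lra|].
    exists K; split; [exact HK|]. intros z Hz.
    replace (f z - f a)%C with ((z - a) * g z)%C by (rewrite (Eg z); ring).
    rewrite Cmod_mult. pose proof (Cmod_ge_0 (z - a)).
    assert (Cmod z <= Cmod a + 1).
    { pose proof (Cmod_triangle (z - a) a) as T. replace (z - a + a)%C with z in T by ring. lra. }
    specialize (Bg z ltac:(assumption)). nra.
Qed.

Lemma is_poly_Cmod_near n f a : is_poly n f -> f a <> 0 ->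
  exists δ K, 0 < δ /\ 0 <= K /\ forall z, Cmod (z - a) <= δ ->
    Rabs (Cmod (f z) - Cmod (f a)) <= K * Cmod (z - a) /\ Cmod (f a) / 2 <= Cmod (f z).
Proof.
  intros Hf Hfa. apply Cmod_gt_0 in Hfa.
  destruct (is_poly_lipschitz_at _ _ a Hf) as [K [HK Lf]].
  set (δ := Rmin 1 (Cmod (f a) / (2 * (K + 1)))).
  assert (Hδ : 0 < δ) by (apply Rmin_pos; [lra | apply Rdiv_lt_0_compat; lra]).
  assert (HKδ : K * δ <= Cmod (f a) / 2).
  { assert (δ <= Cmod (f a) / (2 * (K + 1))) by apply Rmin_r.
    apply Rle_trans with ((K + 1) * (Cmod (f a) / (2 * (K + 1)))); [nra|].
    right; field; lra. }
  exists δ, K; split; [exact Hδ | split; [exact HK|]]. intros z Hz.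
  assert (Hlip : Rabs (Cmod (f z) - Cmod (f a)) <= K * Cmod (z - a)).
  { eapply Rle_trans; [apply Cmod_triangle_inv|].
    apply Lf. eapply Rle_trans; [exact Hz | apply Rmin_l]. }
  split; [exact Hlip|].
  apply Rabs_le_between' in Hlip. pose proof (Cmod_ge_0 (z - a)). nra.
Qed.

Lemma is_poly_root_factor n f a z0 : is_poly n f -> f z0 <> 0 ->
  exists m g, is_poly n g /\ g a <> 0 /\ forall z, f z = (Cpow (z - a) m * g z)%C.
Proof.
  revert f. induction n as [|k IH]; intros f Hf Hz0.
  - exists 0%nat, f; repeat split; [exact Hf | | intros z; simpl; ring].
    rewrite (is_poly0_const _ _ Hf eq_refl a z0); exact Hz0.
  - destruct (classic (f a = 0)) as [Ea | Ea].
    + destruct (is_polyS_divide _ _ Hf k a eq_refl) as [g [Hg Eg]].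
      assert (Hgz0 : g z0 <> 0) by (intros E; apply Hz0; rewrite (Eg z0), Ea, E; ring).
      destruct (IH g Hg Hgz0) as [m [h [Hh [Ha Eh]]]].
      exists (S m), h; repeat split; [apply is_poly_S; exact Hh | exact Ha |].
      intros z; rewrite (Eg z), Ea, (Eh z), Cpow_S; ring.
    + exists 0%nat, f; repeat split; [exact Hf | exact Ea | intros z; simpl; ring].
Qed.

Definition slice (d : nat) (c : nat -> nat -> C) (t1 t2 z : C) : C :=
  poly2_eval d c ((z * t1)%C, (z * t2)%C).

Lemma is_poly_Csum n N (F : nat -> C -> C) : (forall i, (i < N)%nat -> is_poly n (F i)) ->
  is_poly n (fun z => Csum (fun i => F i z) N).
Proof.
  induction N as [|N IH]; intros HF; simpl.
  - apply is_poly_const_le.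
  - apply (is_poly_ext _ (fun z => (Csum (fun i => F i z) N + F N z)%C)); [|reflexivity].
    apply is_poly_add; [apply IH; intros; apply HF; lia | apply HF; lia].
Qed.

Lemma is_poly_Cpow_scaled a i : is_poly i (fun z => Cpow (z * a)%C i).
Proof.
  induction i as [|i IH]; simpl.
  - apply is_poly_const.
  - apply (is_poly_ext _ (fun z => (z * a * Cpow (z * a)%C i)%C)); [|reflexivity].
    apply (is_poly_mul 1 i); [|exact IH].
    apply (is_poly_mul 1 0); [apply is_poly_id | apply is_poly_const].
Qed.

Lemma is_poly_slice d c t1 t2 : is_poly (d + d) (slice d c t1 t2).
Proof.
  apply is_poly_Csum; intros i Hi. apply is_poly_Csum; intros j Hj. cbn [fst snd].
  apply (is_poly_le (0 + (i + j))); [|lia].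
  apply (is_poly_ext _ (fun z => (c i j * (Cpow (z * t1) i * Cpow (z * t2) j))%C)); [|reflexivity].
  apply is_poly_mul; [apply is_poly_const | apply is_poly_mul; apply is_poly_Cpow_scaled].
Qed.

Lemma le_0_of_le_mult_near_0 c S t0 : 0 < t0 -> (forall t, 0 < t <= t0 -> c <= t * S) -> c <= 0.
Proof.
  intros Ht0 H. destruct (Rle_dec c 0) as [Hc | Hc]; [exact Hc|]. exfalso.
  set (t := Rmin t0 (c / (2 * (Rabs S + 1)))).
  assert (Ht : 0 < t) by (apply Rmin_pos; [lra | apply Rdiv_lt_0_compat; pose proof (Rabs_pos S); lra]).
  assert (HtS : t * (Rabs S + 1) <= c / 2).
  { apply Rle_trans with (c / (2 * (Rabs S + 1)) * (Rabs S + 1)).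
    - apply Rmult_le_compat_r; [pose proof (Rabs_pos S); lra | apply Rmin_r].
    - right; field; pose proof (Rabs_pos S); lra. }
  specialize (H t (conj Ht (Rmin_l _ _))). pose proof (Rle_abs S). nra.
Qed.

Lemma pow_order_not_lt (x y : R -> R) a b K t0 m n : 0 < a -> 0 < t0 ->
  (forall t, 0 < t <= t0 ->
    Rabs (x t - a) <= K * t /\ Rabs (y t - b) <= K * t /\ t ^ m * x t = t ^ n * y t) ->
  ~ (m < n)%nat.
Proof.
  intros Ha Ht0 near_0 Hmn. assert (a <= 0); [|lra].
  apply (le_0_of_le_mult_near_0 a (Rabs b + 2 * K) (Rmin t0 1)); [apply Rmin_pos; lra|].
  intros t [Ht Htm]. pose proof (Rmin_l t0 1). pose proof (Rmin_r t0 1).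
  destruct (near_0 t ltac:(lra)) as [Ex [Ey E]].
  assert (HK : 0 <= K) by (pose proof (Rabs_pos (x t - a)); nra).
  replace n with (m + S (n - m - 1))%nat in E by lia.
  rewrite pow_add, Rmult_assoc in E. apply Rmult_eq_reg_l in E; [|apply pow_nonzero; lra].
  assert (Hpow : 0 <= t ^ (n - m - 1) <= 1).
  { split; [apply pow_le; lra|]. rewrite <- (pow1 (n - m - 1)). apply pow_incr; lra. }
  assert (Hx : Rabs (x t) <= t * Rabs (y t)).
  { rewrite E, Rabs_mult, (Rabs_right (t ^ _)) by (apply Rle_ge, pow_le; lra).
    apply Rmult_le_compat_r; [apply Rabs_pos|]. simpl; nra. }
  assert (Hy : Rabs (y t) <= Rabs b + K * t).
  { replace (y t) with ((y t - b) + b) by ring.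
    eapply Rle_trans; [apply Rabs_triang | lra]. }
  apply Rabs_le_between' in Ex. pose proof (Rle_abs (x t)). nra.
Qed.

Lemma pow_orders_eq (x y : R -> R) a b K t0 m n : 0 < a -> 0 < b -> 0 < t0 ->
  (forall t, 0 < t <= t0 ->
    Rabs (x t - a) <= K * t /\ Rabs (y t - b) <= K * t /\ t ^ m * x t = t ^ n * y t) ->
  m = n /\ a = b.
Proof.
  intros Ha Hb Ht0 near_0.
  destruct (Nat.lt_total m n) as [Hlt | [Heq | Hgt]].
  - exfalso; exact (pow_order_not_lt x y a b K t0 m n Ha Ht0 near_0 Hlt).
  - subst n. split; [reflexivity|].
    assert (Hab : Rabs (a - b) <= 0); [|apply Rabs_le_between in Hab; lra].
    apply (le_0_of_le_mult_near_0 _ (2 * K) t0 Ht0). intros t Ht.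
    destruct (near_0 t Ht) as [Ex [Ey E]].
    apply Rmult_eq_reg_l in E; [|apply pow_nonzero; lra].
    replace (a - b) with ((y t - b) - (x t - a)) by (rewrite E; ring).
    eapply Rle_trans; [apply Rabs_triang|]. rewrite Rabs_Ropp. lra.
  - exfalso. apply (pow_order_not_lt y x b a K t0 n m Hb Ht0); [|exact Hgt].
    intros t Ht. destruct (near_0 t Ht) as [Ex [Ey E]]. auto.
Qed.

Definition circle_point (t : R) : C := (1 - t ^ 2 / 2, t * sqrt (1 - t ^ 2 / 4)).

Lemma circle_point_spec t : 0 <= t <= 2 ->
  Cmod (circle_point t) = 1 /\ Cmod (circle_point t - 1) = t.
Proof.
  intros Ht. assert (Hs : sqrt (1 - t ^ 2 / 4) * sqrt (1 - t ^ 2 / 4) = 1 - t ^ 2 / 4)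
    by (apply sqrt_sqrt; nra).
  unfold Cmod, circle_point, Cminus, Cplus, Copp, RtoC; cbn [fst snd].
  set (s := sqrt (1 - t ^ 2 / 4)) in *.
  split.
  - transitivity (sqrt 1); [f_equal; nra | apply sqrt_1].
  - transitivity (sqrt (t ^ 2)); [f_equal; nra | apply sqrt_pow2; lra].
Qed.

Lemma root_order_eq_of_Cmod_eq_on_circle (P Q : C -> C) nP nQ :
  is_poly nP P -> is_poly nQ Q -> P 0 <> 0 ->
  (forall z, Cmod z = 1 -> P z <> 0 -> Cmod (Q z) = Cmod (P z)) ->
  exists m A B, is_poly nP A /\ is_poly nQ B /\ A 1 <> 0 /\ Cmod (B 1) = Cmod (A 1) /\
    (forall z, P z = (Cpow (z - 1) m * A z)%C) /\ (forall z, Q z = (Cpow (z - 1) m * B z)%C).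
Proof.
  intros HP HQ HP0 HPQ.
  destruct (is_poly_root_factor _ _ 1 0 HP HP0) as [m [A [HA [HA1 EA]]]].
  destruct (is_poly_Cmod_near _ _ 1 HA HA1) as [δA [KA [HδA [HKA NA]]]].
  pose proof HA1 as Ha. apply Cmod_gt_0 in Ha.
  set (t0 := Rmin 2 δA).
  assert (Ht0 : 0 < t0) by (apply Rmin_pos; lra).
  assert (Ht0_le : t0 <= 2 /\ t0 <= δA) by (split; [apply Rmin_l | apply Rmin_r]).
  assert (Harc : forall t, 0 < t <= t0 ->
    Cmod (circle_point t) = 1 /\ Cmod (circle_point t - 1) = t /\
    Cmod (P (circle_point t)) = t ^ m * Cmod (A (circle_point t)) /\ P (circle_point t) <> 0).
  { intros t Ht.
    destruct (circle_point_spec t ltac:(lra)) as [C1 C2].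
    destruct (NA (circle_point t) ltac:(lra)) as [_ HAt].
    assert (EP : Cmod (P (circle_point t)) = t ^ m * Cmod (A (circle_point t)))
      by (rewrite EA, Cmod_mult, Cmod_Cpow, C2; reflexivity).
    repeat split; [exact C1 | exact C2 | exact EP |].
    apply Cmod_gt_0. rewrite EP. apply Rmult_lt_0_compat; [apply pow_lt|]; lra. }
  assert (HQt0 : Q (circle_point t0) <> 0).
  { destruct (Harc t0 ltac:(lra)) as [C1 [_ [_ HPt0]]].
    apply Cmod_gt_0. rewrite HPQ by assumption. apply Cmod_gt_0; exact HPt0. }
  destruct (is_poly_root_factor _ _ 1 _ HQ HQt0) as [m' [B [HB [HB1 EB]]]].
  destruct (is_poly_Cmod_near _ _ 1 HB HB1) as [δB [KB [HδB [HKB NB]]]].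
  destruct (pow_orders_eq (fun t => Cmod (A (circle_point t))) (fun t => Cmod (B (circle_point t)))
    (Cmod (A 1)) (Cmod (B 1)) (KA + KB) (Rmin t0 δB) m m') as [Em Eab];
    [exact Ha | apply Cmod_gt_0; exact HB1 | apply Rmin_pos; lra | |].
  { intros t Ht. pose proof (Rmin_l t0 δB). pose proof (Rmin_r t0 δB).
    destruct (Harc t ltac:(lra)) as [C1 [C2 [EP HPt]]].
    destruct (NA (circle_point t) ltac:(lra)) as [LA _].
    destruct (NB (circle_point t) ltac:(lra)) as [LB _].
    rewrite C2 in LA, LB. repeat split; [nra | nra |].
    rewrite <- EP, <- HPQ by assumption.
    rewrite EB, Cmod_mult, Cmod_Cpow, C2; reflexivity. }
  subst m'. exists m, A, B; repeat split; auto.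
Qed.

Lemma ratio_deviation_bound a x y KA KB u : 0 < a -> 0 < u -> a / 2 <= x ->
  Rabs (x - a) <= KA * u -> Rabs (y - a) <= KB * u ->
  Rabs ((1 - y / x) / u) <= 2 * (KA + KB) / a.
Proof.
  intros Ha Hu Hx Ex Ey.
  assert (Exy : Rabs (x - y) <= (KA + KB) * u).
  { replace (x - y) with ((x - a) - (y - a)) by ring.
    eapply Rle_trans; [apply Rabs_triang|]. rewrite Rabs_Ropp. lra. }
  replace ((1 - y / x) / u) with ((x - y) / (x * u)) by (field; lra).
  unfold Rdiv. rewrite Rabs_mult, (Rabs_right (/ (x * u))) by (apply Rle_ge, Rlt_le, Rinv_0_lt_compat; nra).
  apply Rle_trans with ((KA + KB) * u * / (x * u)).
  - apply Rmult_le_compat_r; [apply Rlt_le, Rinv_0_lt_compat; nra | exact Exy].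
  - replace ((KA + KB) * u * / (x * u)) with ((KA + KB) * / x) by (field; lra).
    replace (2 * (KA + KB) * / a) with ((KA + KB) * / (a / 2)) by (field; lra).
    apply Rmult_le_compat_l; [pose proof (Rabs_pos (x - y)); nra | apply Rinv_le_contravar; lra].
Qed.

Lemma radial_Cmod_ratio_bound (P Q A B : C -> C) nA nB m :
  is_poly nA A -> is_poly nB B -> A 1 <> 0 -> Cmod (B 1) = Cmod (A 1) ->
  (forall z, P z = (Cpow (z - 1) m * A z)%C) -> (forall z, Q z = (Cpow (z - 1) m * B z)%C) ->
  exists s M, 0 < s <= 1 /\ forall u, 0 < u <= s ->
    Rabs ((1 - Cmod (Q (RtoC (1 - u)) / P (RtoC (1 - u)))) / u) <= M.
Proof.
  intros HA HB HA1 Eab EP EQ.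
  destruct (is_poly_Cmod_near _ _ 1 HA HA1) as [δA [KA [HδA [HKA NA]]]].
  assert (HB1 : B 1 <> 0) by (apply Cmod_gt_0; rewrite Eab; apply Cmod_gt_0; exact HA1).
  destruct (is_poly_Cmod_near _ _ 1 HB HB1) as [δB [KB [HδB [HKB NB]]]].
  pose proof HA1 as Ha. apply Cmod_gt_0 in Ha.
  exists (Rmin 1 (Rmin δA δB)), (2 * (KA + KB) / Cmod (A 1)).
  split; [split; [apply Rmin_pos; [lra | apply Rmin_pos; lra] | apply Rmin_l]|].
  intros u [Hu Hus].
  pose proof (Rmin_r 1 (Rmin δA δB)). pose proof (Rmin_l δA δB). pose proof (Rmin_r δA δB).
  set (z := RtoC (1 - u)).
  assert (Hz : Cmod (z - 1) = u).
  { unfold z. rewrite <- RtoC_minus, Cmod_R. replace (1 - u - 1) with (- u) by ring.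
    rewrite Rabs_Ropp; apply Rabs_right; lra. }
  destruct (NA z ltac:(lra)) as [LA HAz]. destruct (NB z ltac:(lra)) as [LB _].
  rewrite Hz in LA, LB. rewrite Eab in LB.
  assert (Hpow : 0 < u ^ m) by (apply pow_lt; lra).
  rewrite Cmod_div by (apply Cmod_gt_0; rewrite EP, Cmod_mult, Cmod_Cpow, Hz; nra).
  rewrite EP, EQ, !Cmod_mult, Cmod_Cpow, Hz.
  replace (u ^ m * Cmod (B z) / (u ^ m * Cmod (A z))) with (Cmod (B z) / Cmod (A z)) by (field; lra).
  replace (1 - u - 1) with (- u) in * by ring.
  apply ratio_deviation_bound; assumption.
Qed.

Lemma Cmod_scale_unit (r : R) (t : C) : Cmod t = 1 -> Cmod (RtoC r * t) = Rabs r.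
Proof. intros Ht; rewrite Cmod_mult, Ht, Cmod_R; ring. Qed.

Lemma B_point_of_radial_bound (phi : C * C -> C) (t1 t2 : C) s M :
  Cmod t1 = 1 -> Cmod t2 = 1 -> 0 < s <= 1 ->
  (forall u, 0 < u <= s ->
    Rabs ((1 - Cmod (phi ((RtoC (1 - u) * t1)%C, (RtoC (1 - u) * t2)%C))) / u) <= M) ->
  B_point phi (t1, t2).
Proof.
  intros Ht1 Ht2 Hs HM.
  set (u := fun k : nat => s / (INR k + 1)).
  assert (Hu : forall k, 0 < u k <= s).
  { intros k. pose proof (pos_INR k). unfold u. split; [apply Rdiv_lt_0_compat; lra|].
    apply Rle_trans with (s / 1); [|right; field].
    apply Rmult_le_compat_l; [lra | apply Rinv_le_contravar; lra]. }
  assert (Hdist : forall k t, Cmod t = 1 -> Cmod (RtoC (1 - u k) * t - t) = u k).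
  { intros k t Ht. replace (RtoC (1 - u k) * t - t)%C with (RtoC (- u k) * t)%C
      by (rewrite RtoC_opp, RtoC_minus; ring).
    rewrite Cmod_scale_unit, Rabs_Ropp by exact Ht. apply Rabs_right; destruct (Hu k); lra. }
  exists (fun k => ((RtoC (1 - u k) * t1)%C, (RtoC (1 - u k) * t2)%C)). split; [|split].
  - intros k. destruct (Hu k). unfold in_D2; cbn [fst snd].
    change Defs.Cmod with Cmod. rewrite !Cmod_scale_unit, Rabs_right by (assumption || lra). lra.
  - intros eps Heps. destruct (archimed_cor1 eps Heps) as [N [HN HN0]].
    exists N. intros k Hk. cbn [fst snd]. change Defs.Csub with Cminus; change Defs.Cmod with Cmod.
    rewrite !Hdist by assumption.
    apply le_INR in Hk. assert (0 < INR N) by (apply lt_0_INR; lia).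
    assert (u k < eps); [|split; assumption].
    apply Rle_lt_trans with (/ INR N); [|exact HN].
    unfold u, Rdiv. apply Rle_trans with (1 * / (INR k + 1)).
    + apply Rmult_le_compat_r; [apply Rlt_le, Rinv_0_lt_compat | ]; lra.
    + rewrite Rmult_1_l. apply Rinv_le_contravar; lra.
  - exists M. intros k. pose proof (Hu k). unfold supnorm; cbn [fst snd]. change Defs.Cmod with Cmod.
    rewrite !Cmod_scale_unit, (Rabs_right (1 - u k)), Rmax_left by (assumption || lra).
    replace (1 - (1 - u k)) with (u k) by ring. apply HM, Hu.
Qed.

Lemma slice_at_0_neq_0 d p q t1 t2 : rational_holo_D2 d p q -> slice d p t1 t2 0 <> 0.
Proof.
  intros Hholo. apply Hholo. unfold in_D2; cbn [fst snd]. change Defs.Cmod with Cmod.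
  rewrite !Cmult_0_l, Cmod_0. lra.
Qed.

Lemma slice_modulus_eq_on_circle d p q t1 t2 : unimodular_ae_T2 d p q ->
  Cmod t1 = 1 -> Cmod t2 = 1 -> forall z, Cmod z = 1 -> slice d p t1 t2 z <> 0 ->
  Cmod (slice d q t1 t2 z) = Cmod (slice d p t1 t2 z).
Proof.
  intros Hunim Ht1 Ht2 z Hz HPz.
  assert (HT2 : in_T2 ((z * t1)%C, (z * t2)%C)).
  { unfold in_T2; cbn [fst snd]. change Defs.Cmod with Cmod.
    rewrite !Cmod_mult, Hz, Ht1, Ht2; split; ring. }
  specialize (Hunim _ HT2 HPz). change (Cmod (slice d q t1 t2 z / slice d p t1 t2 z) = 1) in Hunim.
  rewrite Cmod_div in Hunim by exact HPz. apply Cmod_gt_0 in HPz.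
  apply (Rmult_eq_compat_r (Cmod (slice d p t1 t2 z))) in Hunim.
  field_simplify in Hunim; lra.
Qed.

Theorem lemma2p1 (d : nat) (p q : nat -> nat -> Cx) :
  rational_inner d p q ->
  forall tau : Cx * Cx, in_T2 tau -> B_point (phi_of d p q) tau.
Proof.
  intros [Hholo Hunim] [t1 t2] [Ht1 Ht2]. cbn [fst snd] in Ht1, Ht2.
  destruct (root_order_eq_of_Cmod_eq_on_circle (slice d p t1 t2) (slice d q t1 t2) (d + d) (d + d))
    as (m & A & B & HA & HB & HA1 & Eab & EP & EQ).
  - apply is_poly_slice.
  - apply is_poly_slice.
  - exact (slice_at_0_neq_0 d p q t1 t2 Hholo).
  - exact (slice_modulus_eq_on_circle d p q t1 t2 Hunim Ht1 Ht2).
  - destruct (radial_Cmod_ratio_bound _ _ _ _ _ _ m HA HB HA1 Eab EP EQ) as (s & M & Hs & HM).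
    exact (B_point_of_radial_bound (phi_of d p q) t1 t2 s M Ht1 Ht2 Hs HM).
Qed.
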